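(* Let $\beta>0$ and let $g=\phi^2 g_{flat}$ be an $H_\beta$-invariant Riemannian metric on the flat Klein bottle $K_\beta$ such that $\mathrm{sys}(K_\beta,g)=\pi$. Then, viewing $\phi$ and $\phi_\beta$ as functions of $y\in[0,\beta]$, $$\int_0^\beta\phi(y)\phi_\beta(y)\,dy\ge\int_0^\beta\phi_\beta^2(y)\,dy.$$
   Context: For $\beta>0$ let $\Gamma_\beta$ be the group of isometries of the Euclidean plane generated by $A(x,y)=(x+\pi,-y)$ and $B(x,y)=(x,y+4\beta)$; $K_\beta=\mathbb{R}^2/\Gamma_\beta$ with the induced flat metric $g_{flat}$; functions on $K_\beta$ are identified with $\Gamma_\beta$-invariant functions on $\mathbb{R}^2$. $H_\beta=\mathrm{Isom}(K_\beta,g_{flat})$; a function $\phi$ is $H_\beta$-invariant precisely when it is independent of $x$ and $\phi(y)=\phi(-y)=\phi(y+2\beta)$, so it is determined by its restriction to $[0,\beta]$, and any function on $[0,\beta]$ extends by these rules to a continuous function on $K_\beta$. Let $\phi_0(y)=\frac{2e^y}{1+e^{2y}}$, $\beta_0=\log(1+\sqrt2)$, $\beta_1=\log(2+\sqrt3)$. Define $\phi_\beta$ on $[0,\beta]$: if $\beta\le\pi/4$, $\phi_\beta\equiv\frac{\pi}{4\beta}$; if $\pi/4<\beta<\beta_0$, $\phi_\beta(y)=\phi_0(y)$ for $y\le s_\beta$ and $\phi_0(s_\beta)$ for $y>s_\beta$, where $s_\beta$ is the unique $s\in(0,\beta)$ with $\int_0^s\phi_0(y)dy+(\beta-s)\phi_0(s)=\pi/4$;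 if $\beta_0\le\beta\le\beta_1$, $\phi_\beta=\phi_0$; if $\beta>\beta_1$, $\phi_\beta(y)=\phi_0(y)$ for $y\le\beta_1$ and $\frac12$ for $y>\beta_1$. $\mathrm{sys}(K_\beta,g)$ is the infimum of $g$-lengths of noncontractible closed curves in $K_\beta$. *)

From Stdlib Require Import Reals Lra ClassicalEpsilon.
From Coquelicot Require Import Coquelicot.
Open Scope R_scope.

Definition pt := (R * R)%type.

Definition genA (p : pt) : pt := (fst p + PI, - snd p).
Definition genAinv (p : pt) : pt := (fst p - PI, - snd p).
Definition genB (beta : R) (p : pt) : pt := (fst p, snd p + 4 * beta).
Definition genBinv (beta : R) (p : pt) : pt := (fst p, snd p - 4 * beta).

Inductive in_Gamma (beta : R) : (pt -> pt) -> Prop :=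
| Gamma_id : in_Gamma beta (fun p => p)
| Gamma_A : forall h, in_Gamma beta h -> in_Gamma beta (fun p => genA (h p))
| Gamma_Ainv : forall h, in_Gamma beta h -> in_Gamma beta (fun p => genAinv (h p))
| Gamma_B : forall h, in_Gamma beta h -> in_Gamma beta (fun p => genB beta (h p))
| Gamma_Binv : forall h, in_Gamma beta h -> in_Gamma beta (fun p => genBinv beta (h p)).

Definition C1_curve (cx cy : R -> R) : Prop :=
  forall t, ex_derive cx t /\ ex_derive cy t /\
            continuous (Derive cx) t /\ continuous (Derive cy) t.

Definition conf_length (phi : R -> R) (cx cy : R -> R) : R :=
  RInt (fun t => phi (cy t) * sqrt ((Derive cx t) ^ 2 + (Derive cy t) ^ 2)) 0 1.

(* Noncontractible closed curves in K_beta = lifts to R^2 of the form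
   a path from p to h p with h in Gamma_beta, h <> id (covering theory,
   since R^2 is simply connected and Gamma_beta acts freely). *)
Definition noncontractible_lift (beta : R) (cx cy : R -> R) : Prop :=
  C1_curve cx cy /\
  exists h : pt -> pt, in_Gamma beta h /\ (exists q, h q <> q) /\
    (cx 1, cy 1) = h (cx 0, cy 0).

Definition nc_lengths (beta : R) (phi : R -> R) : R -> Prop :=
  fun L => exists cx cy, noncontractible_lift beta cx cy /\ L = conf_length phi cx cy.

Definition systole_is (beta : R) (phi : R -> R) (s : Rbar) : Prop :=
  is_glb_Rbar (nc_lengths beta phi) s.

(* H_beta-invariant conformal factor, viewed as a function of y only:
   smooth, positive, even and 2beta-periodic. *)
Definition H_invariant_factor (beta : R) (phi : R -> R) : Prop :=
  (forall n y, ex_derive_n phi n y) /\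
  (forall y, 0 < phi y) /\
  (forall y, phi y = phi (- y)) /\
  (forall y, phi y = phi (y + 2 * beta)).

Definition phi0 (y : R) : R := 2 * exp y / (1 + exp (2 * y)).
Definition beta0 : R := ln (1 + sqrt 2).
Definition beta1 : R := ln (2 + sqrt 3).

(* s_beta: the unique s in (0,beta) with int_0^s phi0 + (beta-s) phi0(s) = pi/4
   (chosen by Hilbert's epsilon; it is only used for pi/4 < beta < beta0,
   where it exists and is unique). *)
Definition s_beta (beta : R) : R :=
  epsilon (inhabits 0)
    (fun s => 0 < s < beta /\ RInt phi0 0 s + (beta - s) * phi0 s = PI / 4).

Definition phi_beta (beta : R) (y : R) : R :=
  if Rle_dec beta (PI / 4) then PI / (4 * beta)
  else if Rlt_dec beta beta0 then
    (if Rle_dec y (s_beta beta) then phi0 y else phi0 (s_beta beta))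
  else if Rle_dec beta beta1 then phi0 y
  else (if Rle_dec y beta1 then phi0 y else 1 / 2).

From Stdlib Require Import Reals Lra Classical ClassicalEpsilon.
From Coquelicot Require Import Coquelicot.
Open Scope R_scope.

(* The horizontal loops give
   phi >= 1/2 and the vertical loop gives int_0^beta phi >= pi/4.  The lifts of the great
   circles of the round sphere through the equator points x = 0 and x = pi give, after the
   substitution z = sinh y, a lower bound on int_0^pi f (k sin t) dt for every k, where
   f (z) dz = phi (y) dy.  Averaging these bounds over all great circles, i.e. over the
   rotations of the sphere, yields int_0^y phi >= atan (sinh y) = int_0^y phi0 for y >= 0.
   In every regime phi_beta follows phi0 up to some height and is constant beyond it, so an
   integration by parts against the nonincreasing weight phi_beta turns these three bounds
   into int phi phi_beta >= int phi_beta^2. *)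

Definition C1 (g : R -> R) : Prop :=
  (forall x, ex_derive g x) /\ (forall x, continuous (Derive g) x).

Lemma ex_derive_cont (f : R -> R) x : ex_derive f x -> continuous f x.
Proof. apply (ex_derive_continuous (K := R_AbsRing) (V := R_NormedModule)). Qed.

Lemma C1_continuous g : C1 g -> forall x, continuous g x.
Proof. intros [Hd _] x. apply ex_derive_cont, Hd. Qed.

Lemma C1_of_is_derive g g' :
  (forall x, is_derive g x (g' x)) -> (forall x, continuous g' x) -> C1 g.
Proof.
  intros Hd Hc. split.
  - intros x. exists (g' x). apply Hd.
  - intros x. apply (continuous_ext g'); [|apply Hc].
    intros y. symmetry. apply is_derive_unique, Hd.
Qed.

Lemma C1_ext g k : (forall x, g x = k x) -> C1 g -> C1 k.
Proof.
  intros E [Hd Hc]. split.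
  - intros x. destruct (Hd x) as [l Hl]. exists l. eapply is_derive_ext; [|exact Hl]. auto.
  - intros x. apply (continuous_ext (Derive g)); auto. intros; apply Derive_ext; auto.
Qed.

Lemma C1_comp g k : C1 g -> C1 k -> C1 (fun x => g (k x)).
Proof.
  intros Hg Hk. pose proof (C1_continuous k Hk) as Ck.
  destruct Hg as [Dg Cg], Hk as [Dk Ck'].
  apply (C1_of_is_derive _ (fun y => Derive k y * Derive g (k y))).
  - intros x. apply (is_derive_comp g k x (Derive g (k x)) (Derive k x));
      apply Derive_correct; auto.
  - intros x. apply (continuous_mult (K := R_AbsRing)); auto.
    apply (continuous_comp k (Derive g)); auto.
Qed.

Lemma C1_mult g k : C1 g -> C1 k -> C1 (fun x => g x * k x).
Proof.
  intros Hg Hk. pose proof (C1_continuous k Hk). pose proof (C1_continuous g Hg).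
  destruct Hg as [Dg Cg], Hk as [Dk Ck].
  apply (C1_of_is_derive _ (fun y => Derive g y * k y + g y * Derive k y)).
  - intros x. apply (is_derive_mult g k x (Derive g x) (Derive k x));
      try apply Derive_correct; auto. intros; apply Rmult_comm.
  - intros x. apply (continuous_plus (V := R_NormedModule));
      apply (continuous_mult (K := R_AbsRing)); auto.
Qed.

Lemma C1_affine a b : C1 (fun x => a * x + b).
Proof.
  apply (C1_of_is_derive _ (fun _ => a)); [|intros; apply continuous_const].
  intros x. auto_derive; auto; ring.
Qed.

Lemma C1_scal a : C1 (fun x => a * x).
Proof. apply (C1_ext (fun x => a * x + 0)); [intros; ring|apply C1_affine]. Qed.

Lemma C1_const c : C1 (fun _ => c).
Proof. apply (C1_ext (fun x => 0 * x + c)); [intros; ring|apply C1_affine]. Qed.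

Lemma C1_sin : C1 sin.
Proof.
  apply (C1_of_is_derive _ cos); [apply is_derive_sin|].
  intros x. apply continuity_pt_filterlim, continuity_cos.
Qed.

Lemma ex_RInt_cont (f : R -> R) a b : (forall x, continuous f x) -> ex_RInt f a b.
Proof. intros Hf. apply (ex_RInt_continuous (V := R_CompleteNormedModule)). intros; apply Hf. Qed.

Lemma RInt_minus_cont (f g : R -> R) a b :
  (forall x, continuous f x) -> (forall x, continuous g x) ->
  RInt (fun x => f x - g x) a b = RInt f a b - RInt g a b.
Proof. intros. apply (RInt_minus (V := R_CompleteNormedModule)); apply ex_RInt_cont; auto. Qed.

Lemma RInt_scal_cont (f : R -> R) c a b : (forall x, continuous f x) ->
  RInt (fun x => c * f x) a b = c * RInt f a b.
Proof. intros. apply (RInt_scal (V := R_CompleteNormedModule)); apply ex_RInt_cont; auto. Qed.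

Lemma RInt_Chasles_cont (f : R -> R) a b c : (forall x, continuous f x) ->
  RInt f a b + RInt f b c = RInt f a c.
Proof. intros. apply (RInt_Chasles (V := R_CompleteNormedModule)); apply ex_RInt_cont; auto. Qed.

Lemma RInt_const_R (c a b : R) : RInt (fun _ => c) a b = (b - a) * c.
Proof. rewrite RInt_const. reflexivity. Qed.

Lemma RInt_derive_R (F f : R -> R) a b :
  (forall x, is_derive F x (f x)) -> (forall x, continuous f x) ->
  RInt f a b = F b - F a.
Proof.
  intros HF Hf. apply is_RInt_unique, (is_RInt_derive (V := R_CompleteNormedModule)).
  - intros; apply HF.
  - intros; apply Hf.
Qed.

Lemma RInt_comp_affine (f : R -> R) u v a b : (forall x, continuous f x) ->
  RInt (fun y => u * f (u * y + v)) a b = RInt f (u * a + v) (u * b + v).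
Proof. intros Hf. apply (RInt_comp_lin (V := R_CompleteNormedModule)), ex_RInt_cont, Hf. Qed.

Lemma cosh_pos y : 0 < cosh y.
Proof. unfold cosh. pose proof (exp_pos y). pose proof (exp_pos (- y)). lra. Qed.

Lemma cosh2_sinh2 y : cosh y ^ 2 - sinh y ^ 2 = 1.
Proof.
  unfold cosh, sinh.
  replace (((exp y + exp (- y)) / 2) ^ 2 - ((exp y - exp (- y)) / 2) ^ 2)
    with (exp y * exp (- y)) by field.
  rewrite <- exp_plus, Rplus_opp_r. apply exp_0.
Qed.

Lemma sqrt_sinh2_1 y : sqrt (sinh y ^ 2 + 1) = cosh y.
Proof.
  apply sqrt_lem_1.
  - pose proof (pow2_ge_0 (sinh y)); lra.
  - left; apply cosh_pos.
  - pose proof (cosh2_sinh2 y). lra.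
Qed.

Lemma sinh_ge0 y : 0 <= y -> 0 <= sinh y.
Proof. intros [Hy|<-]; [rewrite <- sinh_0; left; apply sinh_lt|rewrite sinh_0]; lra. Qed.

Lemma is_derive_sinh y : is_derive sinh y (cosh y).
Proof. apply is_derive_Reals, derivable_pt_lim_sinh. Qed.

Lemma is_derive_cosh y : is_derive cosh y (sinh y).
Proof. apply is_derive_Reals, derivable_pt_lim_cosh. Qed.

Lemma is_derive_atan x : is_derive atan x (/ (1 + x ^ 2)).
Proof. apply is_derive_Reals, derivable_pt_lim_atan. Qed.

Lemma is_derive_arcsinh z : is_derive arcsinh z (/ sqrt (z ^ 2 + 1)).
Proof. apply is_derive_Reals, derivable_pt_lim_arcsinh. Qed.

Lemma sqr_plus1_pos z : 0 < z ^ 2 + 1.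
Proof. pose proof (pow2_ge_0 z). lra. Qed.

Lemma C1_inv_sqrt_sqr_plus1 : C1 (fun z => / sqrt (z ^ 2 + 1)).
Proof.
  apply (C1_of_is_derive _ (fun z => - z * / sqrt (z ^ 2 + 1) / (z ^ 2 + 1))).
  - intros z. pose proof (sqr_plus1_pos z). pose proof (sqrt_lt_R0 _ H).
    auto_derive; [repeat split; simpl in *; lra|].
    replace (z * (z * 1)) with (z ^ 2) by ring. rewrite sqrt_sqrt by lra. field. lra.
  - intros x. apply ex_derive_cont. pose proof (sqr_plus1_pos x).
    pose proof (sqrt_lt_R0 _ H). auto_derive. simpl in *. repeat split; lra.
Qed.

Lemma C1_arcsinh : C1 arcsinh.
Proof.
  apply (C1_of_is_derive _ _ is_derive_arcsinh).
  apply C1_continuous, C1_inv_sqrt_sqr_plus1.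
Qed.

Lemma phi0_inv_cosh y : phi0 y = / cosh y.
Proof.
  unfold phi0, cosh. rewrite exp_Ropp.
  replace (2 * y) with (y + y) by ring. rewrite exp_plus.
  pose proof (exp_pos y). field. split; apply Rgt_not_eq; nra.
Qed.

Lemma phi0_pos y : 0 < phi0 y.
Proof. rewrite phi0_inv_cosh. apply Rinv_0_lt_compat, cosh_pos. Qed.

Lemma is_derive_phi0 y : is_derive phi0 y (- sinh y / cosh y ^ 2).
Proof.
  apply (is_derive_ext (fun y => / cosh y)); [intros; symmetry; apply phi0_inv_cosh|].
  apply is_derive_inv; [apply is_derive_cosh|apply Rgt_not_eq, cosh_pos].
Qed.

Lemma continuous_sinh y : continuous sinh y.
Proof. apply ex_derive_cont. eexists; apply is_derive_sinh. Qed.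

Lemma continuous_cosh y : continuous cosh y.
Proof. apply ex_derive_cont. eexists; apply is_derive_cosh. Qed.

Lemma C1_phi0 : C1 phi0.
Proof.
  apply (C1_of_is_derive _ _ is_derive_phi0). intros y.
  apply (continuous_mult (K := R_AbsRing)).
  - apply (continuous_opp (V := R_NormedModule)), continuous_sinh.
  - apply (continuous_comp (fun y => cosh y ^ 2) Rinv).
    + apply ex_derive_cont. eexists. apply (is_derive_pow cosh 2 y _ (is_derive_cosh y)).
    + apply ex_derive_cont. auto_derive.
      pose proof (cosh_pos y). apply Rgt_not_eq, pow_lt; lra.
Qed.

Lemma phi0_continuous y : continuous phi0 y.
Proof. apply C1_continuous, C1_phi0. Qed.

Lemma phi0_sq_continuous y : continuous (fun y => phi0 y ^ 2) y.
Proof.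
  apply (continuous_ext (fun y => phi0 y * phi0 y)); [intros; simpl; ring|].
  apply (continuous_mult (K := R_AbsRing)); apply phi0_continuous.
Qed.

Lemma Derive_phi0_nonpos y : 0 <= y -> Derive phi0 y <= 0.
Proof.
  intros Hy. rewrite (is_derive_unique _ _ _ (is_derive_phi0 y)).
  pose proof (sinh_ge0 y Hy). pose proof (cosh_pos y).
  assert (0 < / cosh y ^ 2) by (apply Rinv_0_lt_compat, pow_lt; lra).
  unfold Rdiv. nra.
Qed.

Lemma is_derive_atan_sinh y : is_derive (fun y => atan (sinh y)) y (phi0 y).
Proof.
  pose proof (is_derive_comp atan sinh y _ _ (is_derive_atan _) (is_derive_sinh y)) as H.
  replace (phi0 y) with (scal (cosh y) (/ (1 + sinh y ^ 2))); [exact H|].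
  rewrite phi0_inv_cosh. pose proof (cosh2_sinh2 y). pose proof (cosh_pos y).
  replace (1 + sinh y ^ 2) with (cosh y ^ 2) by lra.
  change (cosh y * / cosh y ^ 2 = / cosh y). field. lra.
Qed.

Lemma RInt_phi0 Y : RInt phi0 0 Y = atan (sinh Y).
Proof.
  rewrite (RInt_derive_R (fun y => atan (sinh y))).
  - rewrite sinh_0, atan_0, Rminus_0_r. reflexivity.
  - apply is_derive_atan_sinh.
  - apply phi0_continuous.
Qed.

Lemma phi0_0 : phi0 0 = 1.
Proof. rewrite phi0_inv_cosh, cosh_0. apply Rinv_1. Qed.

Lemma sinh_beta0 : sinh beta0 = 1.
Proof.
  unfold sinh, beta0. rewrite exp_Ropp.
  assert (0 < 1 + sqrt 2) by (pose proof (sqrt_pos 2); lra).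
  rewrite exp_ln by auto. pose proof (sqrt_sqrt 2 ltac:(lra)). field_simplify_eq; [|lra]. nra.
Qed.

Lemma beta1_pos : 0 < beta1.
Proof.
  unfold beta1. rewrite <- ln_1. apply ln_increasing; [lra|]. pose proof (sqrt_pos 3); lra.
Qed.

Lemma phi0_beta1 : phi0 beta1 = 1 / 2.
Proof.
  rewrite phi0_inv_cosh. unfold cosh, beta1. rewrite exp_Ropp.
  assert (0 < 2 + sqrt 3) by (pose proof (sqrt_pos 3); lra).
  rewrite exp_ln by auto. pose proof (sqrt_sqrt 3 ltac:(lra)).
  replace (/ (2 + sqrt 3)) with (2 - sqrt 3) by (field_simplify_eq; nra).
  field. lra.
Qed.

(* Uniform continuity on all of R^3.  The integrands of the rotation argument are built from
   [sin], [cos] and continuous functions of bounded arguments, so they have it, and it gives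
   continuity and differentiability of their parameter integrals without compactness arguments. *)
Definition unif_cont3 (F : R -> R -> R -> R) : Prop :=
  forall eps, 0 < eps -> exists delta, 0 < delta /\
    forall x y t x' y' t', Rabs (x - x') < delta -> Rabs (y - y') < delta ->
      Rabs (t - t') < delta -> Rabs (F x y t - F x' y' t') < eps.

Definition bounded3 (F : R -> R -> R -> R) : Prop :=
  exists M, forall x y t, Rabs (F x y t) <= M.

Lemma unif_cont3_const c : unif_cont3 (fun _ _ _ => c).
Proof.
  intros eps He. exists 1. split; [lra|]. intros.
  rewrite Rminus_diag, Rabs_R0. exact He.
Qed.

Lemma unif_cont3_x : unif_cont3 (fun x _ _ => x).
Proof. intros eps He. exists eps. split; auto. Qed.

Lemma unif_cont3_y : unif_cont3 (fun _ y _ => y).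
Proof. intros eps He. exists eps. split; auto. Qed.

Lemma unif_cont3_t : unif_cont3 (fun _ _ t => t).
Proof. intros eps He. exists eps. split; auto. Qed.

Lemma unif_cont3_plus F G :
  unif_cont3 F -> unif_cont3 G -> unif_cont3 (fun x y t => F x y t + G x y t).
Proof.
  intros HF HG eps He.
  destruct (HF (eps / 2)) as [d1 [Hd1 H1]]; [lra|].
  destruct (HG (eps / 2)) as [d2 [Hd2 H2]]; [lra|].
  exists (Rmin d1 d2). split; [apply Rmin_pos; auto|].
  intros x y t x' y' t' Hx Hy Ht.
  pose proof (Rmin_l d1 d2). pose proof (Rmin_r d1 d2).
  specialize (H1 x y t x' y' t' ltac:(lra) ltac:(lra) ltac:(lra)).
  specialize (H2 x y t x' y' t' ltac:(lra) ltac:(lra) ltac:(lra)).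
  replace (F x y t + G x y t - (F x' y' t' + G x' y' t'))
    with ((F x y t - F x' y' t') + (G x y t - G x' y' t')) by ring.
  eapply Rle_lt_trans; [apply Rabs_triang|lra].
Qed.

Lemma unif_cont3_opp F : unif_cont3 F -> unif_cont3 (fun x y t => - F x y t).
Proof.
  intros HF eps He. destruct (HF eps He) as [d [Hd H]]. exists d. split; auto.
  intros. rewrite <- Rabs_Ropp.
  replace (- (- F x y t - - F x' y' t')) with (F x y t - F x' y' t') by ring.
  auto.
Qed.

Lemma unif_cont3_mult F G : unif_cont3 F -> unif_cont3 G -> bounded3 F -> bounded3 G ->
  unif_cont3 (fun x y t => F x y t * G x y t).
Proof.
  intros HF HG [MF BF] [MG BG] eps He.
  assert (HMF : 0 <= MF) by (eapply Rle_trans; [apply Rabs_pos|apply (BF 0 0 0)]).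
  assert (HMG : 0 <= MG) by (eapply Rle_trans; [apply Rabs_pos|apply (BG 0 0 0)]).
  set (e := eps / (MF + MG + 1)).
  assert (He' : 0 < e) by (apply Rdiv_lt_0_compat; lra).
  destruct (HF e He') as [d1 [Hd1 H1]], (HG e He') as [d2 [Hd2 H2]].
  exists (Rmin d1 d2). split; [apply Rmin_pos; auto|].
  intros x y t x' y' t' Hx Hy Ht.
  pose proof (Rmin_l d1 d2). pose proof (Rmin_r d1 d2).
  specialize (H1 x y t x' y' t' ltac:(lra) ltac:(lra) ltac:(lra)).
  specialize (H2 x y t x' y' t' ltac:(lra) ltac:(lra) ltac:(lra)).
  replace (F x y t * G x y t - F x' y' t' * G x' y' t') with
    (F x y t * (G x y t - G x' y' t') + G x' y' t' * (F x y t - F x' y' t')) by ring.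
  eapply Rle_lt_trans; [apply Rabs_triang|]. rewrite !Rabs_mult.
  assert (Rabs (F x y t) * Rabs (G x y t - G x' y' t') <= MF * e)
    by (apply Rmult_le_compat; auto using Rabs_pos; lra).
  assert (Rabs (G x' y' t') * Rabs (F x y t - F x' y' t') <= MG * e)
    by (apply Rmult_le_compat; auto using Rabs_pos; lra).
  assert (MF * e + MG * e < eps).
  { unfold e. replace (MF * (eps / (MF + MG + 1)) + MG * (eps / (MF + MG + 1)))
      with (eps - eps / (MF + MG + 1)) by (field; lra).
    pose proof (Rdiv_lt_0_compat eps (MF + MG + 1) He ltac:(lra)). lra. }
  lra.
Qed.

Lemma unif_cont3_comp_lipschitz (k : R -> R) F :
  (forall a b, Rabs (k a - k b) <= Rabs (a - b)) -> unif_cont3 F ->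
  unif_cont3 (fun x y t => k (F x y t)).
Proof.
  intros Hk HF eps He. destruct (HF eps He) as [d [Hd H]]. exists d. split; auto.
  intros. eapply Rle_lt_trans; [apply Hk|auto].
Qed.

Lemma continuous_bounded_on (k : R -> R) M : (forall x, continuous k x) ->
  exists B, forall x, Rabs x <= M -> Rabs (k x) <= B.
Proof.
  intros Hk. destruct (Rle_lt_dec (- M) M) as [HM|HM].
  - assert (Hc : forall f, (forall x, continuous f x) ->
                  forall c, -M <= c <= M -> continuity_pt f c)
      by (intros f Hf c _; apply continuity_pt_filterlim, Hf).
    destruct (continuity_ab_maj k (- M) M HM (Hc k Hk)) as [a [Ha _]].
    destruct (continuity_ab_maj (fun x => - k x) (- M) M HM) as [b [Hb _]].
    { apply Hc. intros x. apply (continuous_opp (V := R_NormedModule)), Hk. }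
    exists (Rmax (k a) (- k b)). intros x Hx. apply Rabs_le_between in Hx.
    specialize (Ha x Hx). specialize (Hb x Hx).
    pose proof (Rmax_l (k a) (- k b)). pose proof (Rmax_r (k a) (- k b)).
    apply Rabs_le. lra.
  - exists 0. intros x Hx. pose proof (Rabs_pos x). lra.
Qed.

Lemma unif_cont3_comp (k : R -> R) F :
  (forall x, continuous k x) -> unif_cont3 F -> bounded3 F ->
  unif_cont3 (fun x y t => k (F x y t)).
Proof.
  intros Hk HF [M HM] eps He.
  destruct (unifcont_1d k (- (M + 1)) (M + 1) (fun x _ => Hk x) (mkposreal eps He))
    as [[d Hd] Hu]. simpl in Hu.
  destruct (HF (Rmin d 1)) as [d1 [Hd1 H1]]; [apply Rmin_pos; lra|].
  exists d1. split; auto. intros x y t x' y' t' Hx Hy Ht.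
  specialize (H1 x y t x' y' t' Hx Hy Ht).
  pose proof (Rmin_l d 1). pose proof (Rmin_r d 1).
  pose proof (HM x y t) as B1. pose proof (HM x' y' t') as B2.
  apply Rabs_le_between in B1. apply Rabs_le_between in B2.
  assert (Hb : ball (F x' y' t') d (F x y t)) by (change (Rabs (F x y t - F x' y' t') < d); lra).
  specialize (Hu (F x' y' t') (F x y t) ltac:(lra) ltac:(lra) Hb).
  apply NNPP in Hu. exact Hu.
Qed.

Lemma bounded3_const c : bounded3 (fun _ _ _ => c).
Proof. exists (Rabs c). intros; lra. Qed.

Lemma bounded3_plus F G : bounded3 F -> bounded3 G -> bounded3 (fun x y t => F x y t + G x y t).
Proof.
  intros [M1 H1] [M2 H2]. exists (M1 + M2). intros.
  eapply Rle_trans; [apply Rabs_triang|]. specialize (H1 x y t). specialize (H2 x y t). lra.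
Qed.

Lemma bounded3_opp F : bounded3 F -> bounded3 (fun x y t => - F x y t).
Proof. intros [M H]. exists M. intros. rewrite Rabs_Ropp. auto. Qed.

Lemma bounded3_mult F G : bounded3 F -> bounded3 G -> bounded3 (fun x y t => F x y t * G x y t).
Proof.
  intros [M1 H1] [M2 H2]. exists (M1 * M2). intros.
  rewrite Rabs_mult. apply Rmult_le_compat; auto using Rabs_pos.
Qed.

Lemma bounded3_comp (k : R -> R) F : (forall x, continuous k x) -> bounded3 F ->
  bounded3 (fun x y t => k (F x y t)).
Proof.
  intros Hk [M HM]. destruct (continuous_bounded_on k M Hk) as [B HB].
  exists B. intros. apply HB, HM.
Qed.

Lemma bounded3_sin F : bounded3 (fun x y t => sin (F x y t)).
Proof. exists 1. intros. apply Rabs_le, SIN_bound. Qed.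

Lemma bounded3_cos F : bounded3 (fun x y t => cos (F x y t)).
Proof. exists 1. intros. apply Rabs_le, COS_bound. Qed.

Lemma sin_lipschitz a b : Rabs (sin a - sin b) <= Rabs (a - b).
Proof.
  destruct (MVT_gen sin b a cos) as [c [_ ->]].
  - intros x _. apply is_derive_sin.
  - intros x _. apply continuity_sin.
  - rewrite Rabs_mult. rewrite <- (Rmult_1_l (Rabs (a - b))) at 2.
    apply Rmult_le_compat_r; [apply Rabs_pos|]. apply Rabs_le, COS_bound.
Qed.

Lemma cos_lipschitz a b : Rabs (cos a - cos b) <= Rabs (a - b).
Proof.
  destruct (MVT_gen cos b a (fun x => - sin x)) as [c [_ ->]].
  - intros x _. apply is_derive_cos.
  - intros x _. apply continuity_cos.
  - rewrite Rabs_mult, Rabs_Ropp. rewrite <- (Rmult_1_l (Rabs (a - b))) at 2.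
    apply Rmult_le_compat_r; [apply Rabs_pos|]. apply Rabs_le, SIN_bound.
Qed.

Ltac solve_bounded3 := first
  [ apply bounded3_const | apply bounded3_sin | apply bounded3_cos
  | apply bounded3_plus; solve_bounded3
  | apply bounded3_opp; solve_bounded3
  | apply bounded3_mult; solve_bounded3
  | apply bounded3_comp; [assumption|solve_bounded3] ].

Ltac solve_unif_cont3 := first
  [ apply unif_cont3_const | apply unif_cont3_x | apply unif_cont3_y | apply unif_cont3_t
  | apply unif_cont3_plus; solve_unif_cont3
  | apply unif_cont3_opp; solve_unif_cont3
  | apply unif_cont3_mult; [solve_unif_cont3|solve_unif_cont3|solve_bounded3|solve_bounded3]
  | apply (unif_cont3_comp_lipschitz sin); [exact sin_lipschitz|solve_unif_cont3]
  | apply (unif_cont3_comp_lipschitz cos); [exact cos_lipschitz|solve_unif_cont3]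
  | apply unif_cont3_comp; [assumption|solve_unif_cont3|solve_bounded3] ].

Lemma unif_cont3_swap12 F : unif_cont3 F -> unif_cont3 (fun x y t => F y x t).
Proof.
  intros HF eps He. destruct (HF eps He) as [d [Hd H]]. exists d. split; auto.
Qed.

Lemma unif_cont3_swap23 F : unif_cont3 F -> unif_cont3 (fun x y t => F x t y).
Proof.
  intros HF eps He. destruct (HF eps He) as [d [Hd H]]. exists d. split; auto.
Qed.

Lemma unif_cont3_continuous F x y t : unif_cont3 F -> continuous (F x y) t.
Proof.
  intros HF. apply continuity_pt_filterlim. intros eps He.
  destruct (HF eps He) as [d [Hd H]]. exists d. split; auto.
  intros t' [_ Ht']. apply H; auto; rewrite Rminus_diag, Rabs_R0; auto.
Qed.

Lemma unif_cont3_continuity_2d F y x t :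
  unif_cont3 F -> continuity_2d_pt (fun x t => F x y t) x t.
Proof.
  intros HF eps. destruct (HF eps (cond_pos eps)) as [d [Hd H]].
  exists (mkposreal d Hd). simpl. intros x' t' Hx Ht. apply H; auto.
  rewrite Rminus_diag, Rabs_R0; auto.
Qed.

Lemma unif_cont3_ex_RInt F x y a b : unif_cont3 F -> ex_RInt (F x y) a b.
Proof. intros HF. apply ex_RInt_cont. intros; apply unif_cont3_continuous, HF. Qed.

Lemma unif_cont3_RInt F a b : a <= b -> unif_cont3 F ->
  unif_cont3 (fun x y _ => RInt (F x y) a b).
Proof.
  intros Hab HF eps He.
  set (e := eps / (b - a + 1)).
  destruct (HF e) as [d [Hd H]]; [apply Rdiv_lt_0_compat; lra|].
  exists d. split; auto. intros x y _ x' y' _ Hx Hy _.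
  rewrite <- (RInt_minus (V := R_CompleteNormedModule)) by (apply unif_cont3_ex_RInt; auto).
  apply Rle_lt_trans with ((b - a) * e).
  - apply abs_RInt_le_const; auto.
    + apply (ex_RInt_minus (V := R_NormedModule)); apply unif_cont3_ex_RInt; auto.
    + intros t _. left. apply H; auto. rewrite Rminus_diag, Rabs_R0; auto.
  - unfold e. apply Rmult_lt_reg_r with (b - a + 1); [lra|].
    replace ((b - a) * (eps / (b - a + 1)) * (b - a + 1)) with ((b - a) * eps) by (field; lra).
    nra.
Qed.

Lemma is_derive_RInt_param3 F dF a b x y :
  (forall x y t, is_derive (fun z => F z y t) x (dF x y t)) ->
  unif_cont3 F -> unif_cont3 dF ->
  is_derive (fun z => RInt (F z y) a b) x (RInt (dF x y) a b).
Proof.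
  intros HD HF HdF.
  assert (HDu : forall x t, Derive (fun z => F z y t) x = dF x y t)
    by (intros; apply is_derive_unique, HD).
  rewrite <- (RInt_ext (fun t => Derive (fun z => F z y t) x)) by (intros; apply HDu).
  apply (is_derive_RInt_param (fun z t => F z y t)).
  - apply filter_forall. intros z t _. eexists; apply HD.
  - intros t _. apply (continuity_2d_pt_ext (fun u v => dF u y v)).
    + intros; symmetry; apply HDu.
    + apply unif_cont3_continuity_2d, HdF.
  - apply filter_forall. intros z. apply unif_cont3_ex_RInt, HF.
Qed.

Section SphereRotation.

Variable h : R -> R.
Hypothesis h_C1 : C1 h.

Let h_cont : forall x, continuous h x := C1_continuous h h_C1.
Let dh_cont : forall x, continuous (Derive h) x := proj2 h_C1.

(* [u a th t] is a coordinate of the point with polar angle [th] and longitude [t] on the unit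
   sphere, after a rotation by the angle [a]; the area element is [sin th dth dt]. *)
Let u a th t := sin th * sin t * cos a - cos th * sin a.
Let G a th t := sin th * h (u a th t).
Let dG a th t := sin th * Derive h (u a th t) * (- sin th * sin t * sin a - cos th * cos a).
Let P a th t := - sin th * sin t * h (u a th t).
Let dP a th t := - cos th * sin t * h (u a th t)
  - sin th * sin t * Derive h (u a th t) * (cos th * sin t * cos a + sin th * sin a).
Let Q a th t := - cos th * cos t * h (u a th t).
Let dQ a th t := cos th * sin t * h (u a th t)
  - cos th * cos t * Derive h (u a th t) * (sin th * cos t * cos a).

Ltac derive_h_ring := change (Derive (fun x => h x)) with (Derive h); unfold Rminus; ring.

Let unif_cont3_G : unif_cont3 G.
Proof. unfold G, u. solve_unif_cont3. Qed.
Let unif_cont3_dG : unif_cont3 dG.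
Proof. unfold dG, u. solve_unif_cont3. Qed.
Let unif_cont3_P : unif_cont3 (fun th a t => P a th t).
Proof. unfold P, u. solve_unif_cont3. Qed.
Let unif_cont3_dP : unif_cont3 (fun th a t => dP a th t).
Proof. unfold dP, u. solve_unif_cont3. Qed.
Let unif_cont3_dQ : unif_cont3 dQ.
Proof. unfold dQ, u. solve_unif_cont3. Qed.

Let is_derive_G a th t : is_derive (fun z => G z th t) a (dG a th t).
Proof. unfold G, dG, u. auto_derive; [apply h_C1|]. derive_h_ring. Qed.
Let is_derive_P a th t : is_derive (fun z => P a z t) th (dP a th t).
Proof. unfold P, dP, u. auto_derive; [apply h_C1|]. derive_h_ring. Qed.
Let is_derive_Q a th t : is_derive (fun z => Q a th z) t (dQ a th t).
Proof. unfold Q, dQ, u. auto_derive; [apply h_C1|]. derive_h_ring. Qed.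

(* The derivative in the rotation angle is a divergence, so it integrates to zero over the
   sphere. *)
Let dG_div a th t : dG a th t = dP a th t + dQ a th t.
Proof.
  unfold dG, dP, dQ. pose proof (sin2_cos2 t) as Hst. unfold Rsqr in Hst.
  replace (- sin th * sin t * sin a - cos th * cos a) with
    (- sin th * sin t * sin a - cos th * cos a * (sin t * sin t + cos t * cos t))
    by (rewrite Hst; ring).
  ring.
Qed.

Let twoPI_ge0 : 0 <= 2 * PI.
Proof. pose proof PI_RGT_0. lra. Qed.

Let J a th := RInt (G a th) 0 (2 * PI).
Let I a := RInt (J a) 0 PI.

Let RInt_dQ a th : RInt (dQ a th) 0 (2 * PI) = 0.
Proof.
  rewrite (RInt_derive_R (Q a th)).
  - unfold Q, u. rewrite sin_2PI, cos_2PI, sin_0, cos_0. simpl. ring.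
  - intros; apply is_derive_Q.
  - intros; apply unif_cont3_continuous, unif_cont3_dQ.
Qed.

Let RInt_RInt_dG a : RInt (fun th => RInt (dG a th) 0 (2 * PI)) 0 PI = 0.
Proof.
  transitivity (RInt (fun th => RInt (dP a th) 0 (2 * PI)) 0 PI).
  { apply RInt_ext. intros th _.
    rewrite (RInt_ext _ (fun t => plus (dP a th t) (dQ a th t))) by (intros; apply dG_div).
    rewrite (RInt_plus (V := R_CompleteNormedModule)), RInt_dQ.
    - apply Rplus_0_r.
    - exact (unif_cont3_ex_RInt _ th a _ _ unif_cont3_dP).
    - exact (unif_cont3_ex_RInt _ a th _ _ unif_cont3_dQ). }
  rewrite (RInt_derive_R (fun th => RInt (P a th) 0 (2 * PI))).
  - assert (Hz : forall th, sin th = 0 -> RInt (P a th) 0 (2 * PI) = 0).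
    { intros th Hs. rewrite (RInt_ext _ (fun _ => 0)).
      - rewrite RInt_const_R. simpl. ring.
      - intros; unfold P; rewrite Hs; simpl; ring. }
    rewrite (Hz PI sin_PI), (Hz 0 sin_0). simpl. ring.
  - intros th. apply (is_derive_RInt_param3 (fun th a t => P a th t) (fun th a t => dP a th t)).
    + intros; apply is_derive_P.
    + exact unif_cont3_P.
    + exact unif_cont3_dP.
  - intros th. exact (unif_cont3_continuous (fun a _ th => RInt (dP a th) 0 (2 * PI)) a 0 th
      (unif_cont3_swap23 _ (unif_cont3_RInt _ _ _ twoPI_ge0 (unif_cont3_swap12 _ unif_cont3_dP)))).
Qed.

Let is_derive_I a : is_derive I a 0.
Proof.
  rewrite <- (RInt_RInt_dG a).
  exact (is_derive_RInt_param3 (fun a _ th => J a th) (fun a _ th => RInt (dG a th) 0 (2 * PI))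
    0 PI a 0
    (fun a _ th =>
       is_derive_RInt_param3 G dG 0 (2 * PI) a th is_derive_G unif_cont3_G unif_cont3_dG)
    (unif_cont3_swap23 _ (unif_cont3_RInt _ _ _ twoPI_ge0 unif_cont3_G))
    (unif_cont3_swap23 _ (unif_cont3_RInt _ _ _ twoPI_ge0 unif_cont3_dG))).
Qed.

(* A quarter turn of the sphere maps the coordinate [sin th * sin t] to [- cos th]. *)
Lemma RInt_sphere_rotation :
  RInt (fun th => RInt (fun t => sin th * h (sin th * sin t)) 0 (2 * PI)) 0 PI =
  RInt (fun th => RInt (fun t => sin th * h (- cos th)) 0 (2 * PI)) 0 PI.
Proof.
  assert (HI : I (PI / 2) = I 0).
  { pose proof (RInt_derive_R I (fun _ => 0) 0 (PI / 2) is_derive_I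
      (fun _ => continuous_const _ _)).
    rewrite RInt_const_R in H. lra. }
  unfold I, J, G, u in HI. rewrite sin_PI2, cos_PI2, sin_0, cos_0 in HI.
  transitivity
    (RInt (fun th => RInt (fun t => sin th * h (sin th * sin t * 1 - cos th * 0)) 0 (2 * PI)) 0 PI).
  { apply RInt_ext; intros; apply RInt_ext; intros. do 2 f_equal. ring. }
  rewrite <- HI.
  apply RInt_ext; intros; apply RInt_ext; intros. do 2 f_equal. ring.
Qed.

End SphereRotation.

(* Archimedes: a coordinate of a uniformly distributed point of the unit sphere is uniformly
   distributed in [-1, 1]. *)
Lemma RInt_sphere_height h : C1 h ->
  RInt (fun th => RInt (fun t => sin th * h (sin th * sin t)) 0 (2 * PI)) 0 PI =
  2 * PI * RInt h (-1) 1.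
Proof.
  intros Hh. rewrite RInt_sphere_rotation by exact Hh.
  pose proof (C1_continuous h Hh) as Hc.
  rewrite (RInt_ext _ (fun th => 2 * PI * (sin th * h (- cos th)))).
  2:{ intros th _. rewrite RInt_const_R. simpl. ring. }
  rewrite RInt_scal_cont.
  2:{ intros th. apply (continuous_mult (K := R_AbsRing)).
      - apply continuity_pt_filterlim, continuity_sin.
      - apply (continuous_comp (fun th => - cos th) h); auto.
        apply ex_derive_cont. auto_derive. auto. }
  f_equal. transitivity (RInt h (- cos 0) (- cos PI)).
  - apply (RInt_comp h (fun th => - cos th) sin).
    + intros; apply Hc.
    + intros th _. split.
      * auto_derive; auto. ring.
      * apply continuity_pt_filterlim, continuity_sin.
  - rewrite cos_0, cos_PI. f_equal. lra.
Qed.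

Lemma RInt_sin_div_sqrt K : 0 < K ->
  RInt (fun th => sin th / sqrt (1 + (K * sin th) ^ 2)) 0 PI = 2 * atan K / K.
Proof.
  intros HK.
  assert (HS : forall th, 0 < 1 + (K * sin th) ^ 2)
    by (intros; pose proof (pow2_ge_0 (K * sin th)); lra).
  rewrite (RInt_derive_R (fun th => - atan (K * cos th / sqrt (1 + (K * sin th) ^ 2)) / K)).
  - rewrite sin_PI, cos_PI, sin_0, cos_0.
    replace (1 + (K * 0) ^ 2) with 1 by ring. rewrite sqrt_1.
    replace (K * -1 / 1) with (- K) by field. replace (K * 1 / 1) with K by field.
    rewrite atan_opp. simpl. field. lra.
  - intros th. pose proof (HS th). pose proof (sqrt_lt_R0 _ (HS th)).
    auto_derive; [repeat split; simpl in *; lra|].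
    replace (1 + K * sin th * (K * sin th * 1)) with (1 + (K * sin th) ^ 2) by ring.
    set (S := sqrt (1 + (K * sin th) ^ 2)) in *.
    field. repeat split; nra.
  - intros th. pose proof (HS th). pose proof (sqrt_lt_R0 _ (HS th)).
    apply ex_derive_cont. auto_derive. repeat split; simpl in *; lra.
Qed.

Lemma RInt_even (f : R -> R) Y : (forall x, continuous f x) -> (forall y, f y = f (- y)) ->
  RInt f (- Y) Y = 2 * RInt f 0 Y.
Proof.
  intros Hf Hev.
  pose proof (RInt_comp_affine f (-1) 0 0 Y Hf) as H.
  rewrite (RInt_ext _ (fun y => -1 * f y)), RInt_scal_cont in H
    by (auto; intros; rewrite (Hev x); do 2 f_equal; ring).
  replace (-1 * 0 + 0) with 0 in H by ring. replace (-1 * Y + 0) with (- Y) in H by ring.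
  rewrite <- (RInt_Chasles_cont f (- Y) 0 Y Hf).
  rewrite <- (opp_RInt_swap (V := R_CompleteNormedModule)), <- H by (apply ex_RInt_cont; auto).
  unfold opp. simpl. ring.
Qed.

Definition pullback_arcsinh (phi : R -> R) (z : R) : R := phi (arcsinh z) / sqrt (z ^ 2 + 1).

Lemma C1_pullback_arcsinh phi : C1 phi -> C1 (pullback_arcsinh phi).
Proof.
  intros Hphi. apply C1_mult; [apply (C1_comp phi arcsinh Hphi C1_arcsinh)|].
  apply C1_inv_sqrt_sqr_plus1.
Qed.

Lemma RInt_pullback_arcsinh phi Y : (forall x, continuous phi x) ->
  RInt (pullback_arcsinh phi) (- sinh Y) (sinh Y) = RInt phi (- Y) Y.
Proof.
  intros Hphi.
  replace (- sinh Y) with (sinh (- Y)) by (unfold sinh; rewrite Ropp_involutive; field).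
  rewrite <- (RInt_comp (pullback_arcsinh phi) sinh cosh).
  - apply RInt_ext. intros y _. change (cosh y * pullback_arcsinh phi (sinh y) = phi y).
    unfold pullback_arcsinh. rewrite arcsinh_sinh, sqrt_sinh2_1.
    pose proof (cosh_pos y). field. lra.
  - intros z _. apply (continuous_mult (K := R_AbsRing)).
    + apply (continuous_comp arcsinh phi); auto. apply C1_continuous, C1_arcsinh.
    + apply C1_continuous, C1_inv_sqrt_sqr_plus1.
  - intros y _. split; [apply is_derive_sinh|apply continuous_cosh].
Qed.

(* With x = PI * t this is half a great circle of the round sphere in its Mercator chart
   y = arcsinh (tan latitude), where the conformal factor is phi0. *)
Definition great_circle (k t : R) : R := arcsinh (k * sin (PI * t)).

Lemma conf_length_great_circle phi k : C1 phi ->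
  conf_length phi (fun t => PI * t) (great_circle k) =
  sqrt (1 + k ^ 2) * RInt (fun t => pullback_arcsinh phi (k * sin t)) 0 PI.
Proof.
  intros Hphi. unfold conf_length, great_circle.
  assert (Hp : forall t, continuous (fun t => pullback_arcsinh phi (k * sin t)) t).
  { intros t. apply (continuous_comp (fun t => k * sin t)).
    - apply ex_derive_cont. auto_derive. auto.
    - apply C1_continuous, C1_pullback_arcsinh, Hphi. }
  transitivity (RInt (fun t => sqrt (1 + k ^ 2) * pullback_arcsinh phi (k * sin t))
    (PI * 0 + 0) (PI * 1 + 0)).
  2:{ rewrite RInt_scal_cont by exact Hp. f_equal. f_equal; ring. }
  rewrite <- RInt_comp_affine.
  2:{ intros t. apply (continuous_mult (K := R_AbsRing)); [apply continuous_const|apply Hp]. }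
  assert (Dx : forall t, Derive (fun t => PI * t) t = PI)
    by (intros; apply is_derive_unique; auto_derive; auto; ring).
  assert (Dy : forall t, Derive (fun t => arcsinh (k * sin (PI * t))) t =
                         k * (PI * cos (PI * t)) * / sqrt ((k * sin (PI * t)) ^ 2 + 1)).
  { intros t. apply is_derive_unique.
    apply (is_derive_comp arcsinh (fun t => k * sin (PI * t))); [apply is_derive_arcsinh|].
    auto_derive; auto; ring. }
  apply RInt_ext. intros t _. rewrite Dx, Dy, Rplus_0_r.
  pose proof (sin2_cos2 (PI * t)) as Hsc. unfold Rsqr in Hsc.
  set (s := k * sin (PI * t)) in *. set (r := sqrt (s ^ 2 + 1)).
  assert (Hr : 0 < r) by apply sqrt_lt_R0, sqr_plus1_pos.
  assert (Hrr : r * r = s ^ 2 + 1) by (apply sqrt_sqrt; left; apply sqr_plus1_pos).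
  assert (Hk : 0 <= sqrt (1 + k ^ 2)) by apply sqrt_pos.
  unfold pullback_arcsinh. fold r.
  replace (PI ^ 2 + (k * (PI * cos (PI * t)) * / r) ^ 2)
    with ((PI * sqrt (1 + k ^ 2) / r) ^ 2).
  - rewrite sqrt_pow2; [simpl; field; lra|].
    pose proof PI_RGT_0. apply Rmult_le_pos; [nra|left; apply Rinv_0_lt_compat, Hr].
  - field_simplify_eq; [|lra].
    rewrite pow2_sqrt by (pose proof (pow2_ge_0 k); lra).
    replace (r ^ 2) with (r * r) by ring. rewrite Hrr.
    replace (cos (PI * t) ^ 2) with (1 - sin (PI * t) ^ 2) by (simpl; lra).
    unfold s. ring.
Qed.

Section GreatCircleBound.

Variable phi : R -> R.
Hypothesis phi_C1 : C1 phi.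
Hypothesis phi_even : forall y, phi y = phi (- y).
Hypothesis great_circle_long :
  forall k, PI <= conf_length phi (fun t => PI * t) (great_circle k).

Let f := pullback_arcsinh phi.

Let f_cont : forall x, continuous f x.
Proof. apply C1_continuous, C1_pullback_arcsinh, phi_C1. Qed.

Let RInt_f_sin_half_ge k : PI / sqrt (1 + k ^ 2) <= RInt (fun t => f (k * sin t)) 0 PI.
Proof.
  pose proof (great_circle_long k) as H. rewrite conf_length_great_circle in H by exact phi_C1.
  pose proof (sqrt_lt_R0 (1 + k ^ 2)) as Hk. pose proof (pow2_ge_0 k).
  apply Rmult_le_reg_l with (sqrt (1 + k ^ 2)); [lra|].
  replace (sqrt (1 + k ^ 2) * (PI / sqrt (1 + k ^ 2))) with PI by (field; lra). exact H.
Qed.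

Let RInt_f_sin_ge k : 2 * PI / sqrt (1 + k ^ 2) <= RInt (fun t => f (k * sin t)) 0 (2 * PI).
Proof.
  assert (Hc : forall k x : R, continuous (fun t : R => f (k * sin t)) x).
  { intros k' x. apply (continuous_comp (fun t => k' * sin t) f); [|apply f_cont].
    apply ex_derive_cont. auto_derive. auto. }
  rewrite <- (RInt_Chasles_cont _ 0 PI (2 * PI) (Hc k)).
  replace (RInt (fun t => f (k * sin t)) PI (2 * PI)) with (RInt (fun t => f (- k * sin t)) 0 PI).
  - pose proof (RInt_f_sin_half_ge k). pose proof (RInt_f_sin_half_ge (- k)).
    replace ((- k) ^ 2) with (k ^ 2) in * by ring.
    replace (2 * PI / sqrt (1 + k ^ 2)) with (PI / sqrt (1 + k ^ 2) + PI / sqrt (1 + k ^ 2))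
      by (unfold Rdiv; ring).
    apply Rplus_le_compat; assumption.
  - transitivity (RInt (fun t => f (k * sin t)) (1 * 0 + PI) (1 * PI + PI)); [|f_equal; ring].
    rewrite <- RInt_comp_affine by apply Hc.
    apply RInt_ext. intros t _. rewrite Rmult_1_l, Rmult_1_l, neg_sin. f_equal. ring.
Qed.

Let sphere_average K :=
  RInt (fun th => RInt (fun t => sin th * f (K * (sin th * sin t))) 0 (2 * PI)) 0 PI.

Let sphere_average_ge K : 0 < K -> 2 * PI * (2 * atan K / K) <= sphere_average K.
Proof.
  intros HK. pose proof PI_RGT_0 as HPI. unfold sphere_average.
  rewrite <- RInt_sin_div_sqrt by exact HK.
  assert (Hq : forall x, continuous (fun th => sin th / sqrt (1 + (K * sin th) ^ 2)) x).
  { intros x. assert (H : 0 < 1 + (K * sin x) ^ 2) by (pose proof (pow2_ge_0 (K * sin x)); lra).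
    pose proof (sqrt_lt_R0 _ H).
    apply ex_derive_cont. auto_derive. repeat split; simpl in *; lra. }
  rewrite <- RInt_scal_cont by exact Hq.
  apply RInt_le; [lra| | |].
  - apply ex_RInt_cont. intros.
    apply (continuous_mult (K := R_AbsRing)); [apply continuous_const|apply Hq].
  - assert (Hu : unif_cont3 (fun _ th t => sin th * f (K * (sin th * sin t)))) by solve_unif_cont3.
    apply ex_RInt_cont. intros th.
    exact (unif_cont3_continuous _ 0 0 th
      (unif_cont3_swap23 _ (unif_cont3_RInt _ 0 (2 * PI) ltac:(lra) Hu))).
  - intros th Hth.
    rewrite (RInt_ext _ (fun t => sin th * f (K * sin th * sin t)))
      by (intros; do 2 f_equal; ring).
    rewrite RInt_scal_cont.
    2:{ intros t. apply (continuous_comp (fun t => K * sin th * sin t) f); [|apply f_cont].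
        apply ex_derive_cont. auto_derive. auto. }
    replace (2 * PI * (sin th / sqrt (1 + (K * sin th) ^ 2)))
      with (sin th * (2 * PI / sqrt (1 + (K * sin th) ^ 2))) by (unfold Rdiv; ring).
    apply Rmult_le_compat_l; [apply sin_ge_0; lra|apply RInt_f_sin_ge].
Qed.

Let sphere_average_sinh Y : sinh Y * sphere_average (sinh Y) = 2 * PI * (2 * RInt phi 0 Y).
Proof.
  set (K := sinh Y). set (h s := f (K * s)).
  assert (Ch : C1 h)
    by (apply (C1_comp f (fun s => K * s)); [apply C1_pullback_arcsinh, phi_C1|apply C1_scal]).
  unfold sphere_average.
  change (fun th => RInt (fun t => sin th * f (K * (sin th * sin t))) 0 (2 * PI))
    with (fun th => RInt (fun t => sin th * h (sin th * sin t)) 0 (2 * PI)).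
  rewrite (RInt_sphere_height h Ch).
  assert (Hh : K * RInt h (-1) 1 = RInt phi (- Y) Y).
  { rewrite <- RInt_scal_cont by apply (C1_continuous h Ch).
    transitivity (RInt f (K * -1 + 0) (K * 1 + 0)).
    - rewrite <- RInt_comp_affine by exact f_cont.
      apply RInt_ext. intros s _. unfold h. do 2 f_equal. ring.
    - replace (K * -1 + 0) with (- sinh Y) by (unfold K; ring).
      replace (K * 1 + 0) with (sinh Y) by (unfold K; ring).
      apply RInt_pullback_arcsinh, C1_continuous, phi_C1. }
  rewrite <- RInt_even, <- Hh by (auto; apply C1_continuous, phi_C1). simpl. ring.
Qed.

Lemma RInt_ge_atan_sinh Y : 0 <= Y -> atan (sinh Y) <= RInt phi 0 Y.
Proof.
  intros [HY|<-]; [|rewrite sinh_0, atan_0, RInt_point; apply Rle_refl].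
  assert (HK : 0 < sinh Y) by (rewrite <- sinh_0; apply sinh_lt, HY).
  pose proof PI_RGT_0. pose proof (sphere_average_ge (sinh Y) HK) as Hlower.
  apply Rmult_le_reg_l with (4 * PI); [lra|].
  apply Rmult_le_compat_l with (r := sinh Y) in Hlower; [|lra].
  rewrite sphere_average_sinh in Hlower.
  replace (sinh Y * (2 * PI * (2 * atan (sinh Y) / sinh Y))) with (4 * PI * atan (sinh Y))
    in Hlower by (field; lra).
  lra.
Qed.

End GreatCircleBound.

Lemma RInt_even_periodic (f : R -> R) p : (forall x, continuous f x) ->
  (forall y, f y = f (- y)) -> (forall y, f y = f (y + 2 * p)) ->
  RInt f 0 (4 * p) = 4 * RInt f 0 p.
Proof.
  intros Hf Hev Hper.
  assert (Hshift : RInt f (2 * p) (4 * p) = RInt f 0 (2 * p)).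
  { transitivity (RInt f (1 * 0 + 2 * p) (1 * (2 * p) + 2 * p)); [f_equal; ring|].
    rewrite <- RInt_comp_affine by exact Hf.
    apply RInt_ext. intros y _. rewrite Rmult_1_l, Rmult_1_l, <- Hper. reflexivity. }
  assert (Hrefl : RInt f p (2 * p) = RInt f 0 p).
  { pose proof (RInt_comp_affine f (-1) (2 * p) 0 p Hf) as H.
    rewrite (RInt_ext _ (fun y => -1 * f y)), RInt_scal_cont in H
      by (auto; intros y _; rewrite (Hev y), (Hper (- y)); do 2 f_equal; ring).
    replace (-1 * 0 + 2 * p) with (2 * p) in H by ring.
    replace (-1 * p + 2 * p) with p in H by ring.
    rewrite <- (opp_RInt_swap (V := R_CompleteNormedModule) f p (2 * p)) in H
      by (apply ex_RInt_cont; auto).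
    unfold opp in H. simpl in H. lra. }
  rewrite <- (RInt_Chasles_cont f 0 (2 * p) (4 * p) Hf), Hshift.
  rewrite <- (RInt_Chasles_cont f 0 p (2 * p) Hf), Hrefl. simpl. ring.
Qed.

Lemma systole_le_conf_length beta phi cx cy :
  systole_is beta phi (Finite PI) -> noncontractible_lift beta cx cy ->
  PI <= conf_length phi cx cy.
Proof.
  intros [Hlb _] Hnc. apply (Hlb (conf_length phi cx cy)). exists cx, cy. split; auto.
Qed.

Lemma H_invariant_factor_C1 beta phi : H_invariant_factor beta phi -> C1 phi.
Proof.
  intros [Hd _]. split.
  - intros x. exact (Hd 1%nat x).
  - intros x. apply ex_derive_cont. exact (Hd 2%nat x).
Qed.

Lemma C1_curve_of_C1 cx cy : C1 cx -> C1 cy -> C1_curve cx cy.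
Proof. intros [Hx Hx'] [Hy Hy'] t. auto. Qed.

Lemma Derive_scal_R a t : Derive (fun t => a * t) t = a.
Proof. apply is_derive_unique. auto_derive; auto; ring. Qed.

Section SystoleConsequences.

Variables (beta : R) (phi : R -> R).
Hypothesis systole_pi : systole_is beta phi (Finite PI).

Lemma great_circle_long k : PI <= conf_length phi (fun t => PI * t) (great_circle k).
Proof.
  apply (systole_le_conf_length beta); auto. split.
  - apply C1_curve_of_C1; [apply C1_scal|].
    apply (C1_comp arcsinh); [apply C1_arcsinh|].
    apply C1_mult; [apply C1_const|apply (C1_comp sin); [apply C1_sin|apply C1_scal]].
  - exists genA. split; [exact (Gamma_A beta _ (Gamma_id beta))|]. split.
    + exists (0, 0). unfold genA. simpl. intros H. injection H. pose proof PI_RGT_0. lra.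
    + unfold genA, great_circle. simpl.
      rewrite Rmult_1_r, Rmult_0_r, sin_PI, sin_0, Rmult_0_r, arcsinh_0. f_equal; ring.
Qed.

Lemma phi_ge_half y : 1 / 2 <= phi y.
Proof.
  assert (H : PI <= conf_length phi (fun t => 2 * PI * t) (fun _ => y)).
  { apply (systole_le_conf_length beta); auto. split.
    - apply C1_curve_of_C1; [apply C1_scal|apply C1_const].
    - exists (fun p => genA (genA p)).
      split; [exact (Gamma_A beta _ (Gamma_A beta _ (Gamma_id beta)))|].
      split.
      + exists (0, 0). unfold genA. simpl. intros H. injection H. pose proof PI_RGT_0. lra.
      + unfold genA. simpl. f_equal; ring. }
  unfold conf_length in H.
  rewrite (RInt_ext _ (fun _ => phi y * (2 * PI))) in H.
  - rewrite RInt_const_R in H. pose proof PI_RGT_0. simpl in H. nra.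
  - intros t _. rewrite Derive_const, Derive_scal_R. f_equal.
    replace ((2 * PI) ^ 2 + 0 ^ 2) with ((2 * PI) ^ 2) by ring.
    apply sqrt_pow2. pose proof PI_RGT_0. lra.
Qed.

Hypothesis beta_pos : 0 < beta.
Hypothesis phi_invariant : H_invariant_factor beta phi.

Lemma RInt_half_period_ge : PI / 4 <= RInt phi 0 beta.
Proof.
  pose proof (C1_continuous phi (H_invariant_factor_C1 beta phi phi_invariant)) as Hc.
  assert (H : PI <= conf_length phi (fun _ => 0) (fun t => 4 * beta * t)).
  { apply (systole_le_conf_length beta); auto. split.
    - apply C1_curve_of_C1; [apply C1_const|apply C1_scal].
    - exists (genB beta). split; [exact (Gamma_B beta _ (Gamma_id beta))|]. split.
      + exists (0, 0). unfold genB. simpl. intros H. injection H. lra.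
      + unfold genB. simpl. f_equal; ring. }
  unfold conf_length in H.
  rewrite (RInt_ext _ (fun t => 4 * beta * phi (4 * beta * t + 0))) in H.
  - rewrite RInt_comp_affine in H by exact Hc.
    replace (4 * beta * 0 + 0) with 0 in H by ring.
    replace (4 * beta * 1 + 0) with (4 * beta) in H by ring.
    destruct phi_invariant as [_ [_ [Hev Hper]]].
    rewrite (RInt_even_periodic phi beta Hc Hev Hper) in H. lra.
  - intros t _. rewrite Derive_const, Derive_scal_R, Rplus_0_r.
    replace (0 ^ 2 + (4 * beta) ^ 2) with ((4 * beta) ^ 2) by ring.
    rewrite sqrt_pow2 by lra. simpl. ring.
Qed.

End SystoleConsequences.

Lemma is_derive_RInt_upper (f : R -> R) a y : (forall x, continuous f x) ->
  is_derive (fun y => RInt f a y) y (f y).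
Proof.
  intros Hf. apply (is_derive_RInt f (fun y => RInt f a y) a); [|apply Hf].
  apply filter_forall. intros b.
  apply (RInt_correct (V := R_CompleteNormedModule)), ex_RInt_cont, Hf.
Qed.

(* Integration by parts against the antiderivative of [f - g], which is nonnegative. *)
Lemma RInt_mult_nonincreasing_le (f g w : R -> R) a b : a <= b ->
  (forall x, continuous f x) -> (forall x, continuous g x) -> C1 w ->
  (forall y, a <= y <= b -> Derive w y <= 0) -> 0 <= w b ->
  (forall y, a <= y <= b -> RInt g a y <= RInt f a y) ->
  RInt (fun y => g y * w y) a b <= RInt (fun y => f y * w y) a b.
Proof.
  intros Hab Hf Hg Hw Hw' Hwb Hfg.
  pose proof (C1_continuous w Hw) as Hw0. destruct Hw as [Dw Cw].
  set (d y := f y - g y). set (D y := RInt d a y).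
  assert (Hd : forall x, continuous d x)
    by (intros; apply (continuous_minus (V := R_NormedModule)); auto).
  assert (HD : forall y, a <= y <= b -> 0 <= D y).
  { intros y Hy. unfold D, d. rewrite RInt_minus_cont by auto. specialize (Hfg y Hy). lra. }
  assert (Hdw : forall x, continuous (fun y => d y * w y) x)
    by (intros; apply (continuous_mult (K := R_AbsRing)); auto).
  assert (HDw : forall x, continuous (fun y => D y * Derive w y) x).
  { intros x. apply (continuous_mult (K := R_AbsRing)); auto.
    apply ex_derive_cont. eexists. apply is_derive_RInt_upper, Hd. }
  assert (Hparts :
    RInt (fun y => d y * w y) a b + RInt (fun y => D y * Derive w y) a b = D b * w b).
  { rewrite <- (RInt_plus (V := R_CompleteNormedModule)) by (apply ex_RInt_cont; auto).
    rewrite (RInt_derive_R (fun y => D y * w y)).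
    - unfold D at 2. rewrite RInt_point. unfold zero. simpl. ring.
    - intros y.
      apply (is_derive_mult D w y); [apply is_derive_RInt_upper, Hd|apply Derive_correct, Dw|].
      intros; apply Rmult_comm.
    - intros x. apply (continuous_plus (V := R_NormedModule)); auto. }
  assert (Hneg : RInt (fun y => D y * Derive w y) a b <= 0).
  { rewrite <- (Rmult_0_r (b - a)), <- RInt_const_R.
    apply RInt_le; auto; try apply ex_RInt_cont; auto using continuous_const.
    intros y Hy. pose proof (HD y ltac:(lra)). pose proof (Hw' y ltac:(lra)). nra. }
  pose proof (HD b ltac:(lra)).
  rewrite (RInt_ext (fun y => f y * w y) (fun y => d y * w y + g y * w y))
    by (intros; unfold d; simpl; ring).
  rewrite (RInt_plus (V := R_CompleteNormedModule)) by (apply ex_RInt_cont; intros;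
    try apply (continuous_mult (K := R_AbsRing)); auto).
  pose proof (Rmult_le_pos _ _ H Hwb). unfold plus. simpl. lra.
Qed.

Lemma RInt_piecewise (F G w : R -> R) a s b : a <= s <= b ->
  (forall x, continuous F x) -> (forall x, continuous G x) ->
  (forall y, a < y < s -> w y = F y) -> (forall y, s < y < b -> w y = G y) ->
  RInt w a b = RInt F a s + RInt G s b.
Proof.
  intros Hs HF HG HwF HwG.
  assert (EF : forall x, Rmin a s < x < Rmax a s -> F x = w x)
    by (intros x Hx; rewrite Rmin_left, Rmax_right in Hx by lra; symmetry; auto).
  assert (EG : forall x, Rmin s b < x < Rmax s b -> G x = w x)
    by (intros x Hx; rewrite Rmin_left, Rmax_right in Hx by lra; symmetry; auto).
  rewrite <- (RInt_Chasles (V := R_CompleteNormedModule) w a s b).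
  - rewrite (RInt_ext _ _ _ _ EF), (RInt_ext _ _ _ _ EG). reflexivity.
  - apply (ex_RInt_ext F w _ _ EF), ex_RInt_cont, HF.
  - apply (ex_RInt_ext G w _ _ EG), ex_RInt_cont, HG.
Qed.

Lemma RInt_const_profile_le (phi : R -> R) c b : (forall x, continuous phi x) ->
  0 <= c -> b * c <= RInt phi 0 b -> RInt (fun _ => c ^ 2) 0 b <= RInt (fun y => phi y * c) 0 b.
Proof.
  intros Hphi Hc Hb. rewrite RInt_const_R.
  rewrite (RInt_ext _ (fun y => c * phi y)), RInt_scal_cont by (auto; intros; apply Rmult_comm).
  replace ((b - 0) * c ^ 2) with (c * (b * c)) by ring.
  apply Rmult_le_compat_l; assumption.
Qed.

Section Phi0Profiles.

Variable phi : R -> R.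
Hypothesis phi_cont : forall x, continuous phi x.
Hypothesis RInt_phi0_le : forall y, 0 <= y -> RInt phi0 0 y <= RInt phi 0 y.

Lemma RInt_phi0_profile_le b : 0 <= b ->
  RInt (fun y => phi0 y ^ 2) 0 b <= RInt (fun y => phi y * phi0 y) 0 b.
Proof.
  intros Hb. rewrite (RInt_ext _ (fun y => phi0 y * phi0 y)) by (intros; simpl; ring).
  apply RInt_mult_nonincreasing_le; auto using phi0_continuous, C1_phi0.
  - intros y Hy. apply Derive_phi0_nonpos. lra.
  - left. apply phi0_pos.
  - intros y Hy. apply RInt_phi0_le. lra.
Qed.

Lemma RInt_phi0_shifted_profile_le s : 0 <= s ->
  RInt (fun y => phi0 y ^ 2) 0 s - phi0 s * RInt phi0 0 s <=
  RInt (fun y => phi y * phi0 y) 0 s - phi0 s * RInt phi 0 s.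
Proof.
  intros Hs. set (c := phi0 s).
  assert (Hw : forall y, is_derive (fun y => phi0 y - c) y (Derive phi0 y)).
  { intros y. pose proof (is_derive_minus phi0 (fun _ => c) y _ _
      (Derive_correct _ _ (proj1 C1_phi0 y)) (is_derive_const c y)) as H.
    unfold minus, plus, opp, zero in H. simpl in H. rewrite Ropp_0, Rplus_0_r in H. exact H. }
  assert (Hprod : forall g h : R -> R, (forall x, continuous g x) -> (forall x, continuous h x) ->
                  forall x, continuous (fun y => g y * h y) x)
    by (intros; apply (continuous_mult (K := R_AbsRing)); auto).
  replace (RInt (fun y => phi0 y ^ 2) 0 s - c * RInt phi0 0 s)
    with (RInt (fun y => phi0 y * (phi0 y - c)) 0 s).
  2:{ rewrite <- RInt_scal_cont, <- RInt_minus_cont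
        by auto using phi0_continuous, phi0_sq_continuous, continuous_const.
      apply RInt_ext. intros; simpl; ring. }
  replace (RInt (fun y => phi y * phi0 y) 0 s - c * RInt phi 0 s)
    with (RInt (fun y => phi y * (phi0 y - c)) 0 s).
  2:{ rewrite <- RInt_scal_cont, <- RInt_minus_cont by auto using phi0_continuous, continuous_const.
      apply RInt_ext. intros; simpl; ring. }
  apply RInt_mult_nonincreasing_le; auto using phi0_continuous.
  - apply (C1_of_is_derive _ _ Hw), C1_phi0.
  - intros y Hy. erewrite is_derive_unique by apply Hw. apply Derive_phi0_nonpos. lra.
  - unfold c. lra.
  - intros y Hy. apply RInt_phi0_le. lra.
Qed.

Lemma RInt_truncated_profile_le s b : 0 <= s <= b ->
  RInt phi0 0 s + (b - s) * phi0 s <= RInt phi 0 b ->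
  RInt (fun y => (if Rle_dec y s then phi0 y else phi0 s) ^ 2) 0 b <=
  RInt (fun y => phi y * (if Rle_dec y s then phi0 y else phi0 s)) 0 b.
Proof.
  intros Hs Hmass. pose proof (RInt_phi0_shifted_profile_le s ltac:(lra)) as Hparts.
  set (c := phi0 s) in *. assert (Hc : 0 < c) by apply phi0_pos.
  assert (Hpp : forall x, continuous (fun y => phi y * phi0 y) x)
    by (intros; apply (continuous_mult (K := R_AbsRing)); auto using phi0_continuous).
  assert (Hpc : forall x, continuous (fun y => phi y * c) x)
    by (intros; apply (continuous_mult (K := R_AbsRing)); auto using continuous_const).
  assert (Hleft : forall y, y < s -> (if Rle_dec y s then phi0 y else c) = phi0 y)
    by (intros y Hy; destruct (Rle_dec y s); lra).
  assert (Hright : forall y, s < y -> (if Rle_dec y s then phi0 y else c) = c)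
    by (intros y Hy; destruct (Rle_dec y s); lra).
  rewrite (RInt_piecewise (fun y => phi0 y ^ 2) (fun _ => c ^ 2) _ 0 s b Hs phi0_sq_continuous
             (fun _ => continuous_const _ _)),
    (RInt_piecewise (fun y => phi y * phi0 y) (fun y => phi y * c) _ 0 s b Hs Hpp Hpc).
  2-5: intros y Hy; first [rewrite Hleft by lra | rewrite Hright by lra]; reflexivity.
  rewrite RInt_const_R, (RInt_ext (fun y => phi y * c) (fun y => c * phi y)), RInt_scal_cont
    by (auto; intros; apply Rmult_comm).
  pose proof (RInt_Chasles_cont phi 0 s b phi_cont).
  assert (c * (RInt phi0 0 s + (b - s) * c) <= c * RInt phi 0 b) by (apply Rmult_le_compat_l; lra).
  simpl in *. nra.
Qed.

Lemma RInt_phi0_beta1_mass_le b : beta1 <= b -> (forall y, 1 / 2 <= phi y) ->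
  RInt phi0 0 beta1 + (b - beta1) * phi0 beta1 <= RInt phi 0 b.
Proof.
  intros Hb Hhalf. pose proof beta1_pos.
  rewrite phi0_beta1, <- (RInt_Chasles_cont phi 0 beta1 b phi_cont).
  apply Rplus_le_compat; [apply RInt_phi0_le; lra|].
  rewrite <- RInt_const_R.
  apply RInt_le; [lra| |apply ex_RInt_cont, phi_cont|].
  - apply ex_RInt_cont. intros. apply continuous_const.
  - intros y _. apply Hhalf.
Qed.

End Phi0Profiles.

Lemma s_beta_spec beta : PI / 4 < beta < beta0 ->
  0 < s_beta beta < beta /\
  RInt phi0 0 (s_beta beta) + (beta - s_beta beta) * phi0 (s_beta beta) = PI / 4.
Proof.
  intros Hb. unfold s_beta. apply epsilon_spec.
  set (g s := PI / 4 - atan (sinh s) - (beta - s) * phi0 s).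
  assert (Hg : continuity g).
  { intros s. apply continuity_pt_filterlim, ex_derive_cont. unfold g.
    auto_derive. eexists. apply is_derive_phi0. }
  assert (Hg0 : g 0 < 0) by (unfold g; rewrite phi0_0, sinh_0, atan_0; lra).
  assert (Hgb : 0 < g beta).
  { assert (atan (sinh beta) < PI / 4).
    { rewrite <- atan_1, <- sinh_beta0. apply atan_increasing, sinh_lt. lra. }
    unfold g. rewrite Rminus_diag, Rmult_0_l. lra. }
  pose proof PI_RGT_0.
  destruct (IVT g 0 beta Hg ltac:(lra) Hg0 Hgb) as [s [Hs Hgs]].
  assert (s <> 0) by (intros ->; lra). assert (s <> beta) by (intros ->; lra).
  exists s. unfold g in Hgs. rewrite RInt_phi0. split; lra.
Qed.

Theorem lemma2p4 (beta : R) (phi : R -> R) :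
  0 < beta ->
  H_invariant_factor beta phi ->
  systole_is beta phi (Finite PI) ->
  RInt (fun y => phi y * phi_beta beta y) 0 beta >=
  RInt (fun y => (phi_beta beta y) ^ 2) 0 beta.
Proof.
  intros Hb Hinv Hsys. apply Rle_ge.
  pose proof (H_invariant_factor_C1 beta phi Hinv) as Hphi.
  pose proof (C1_continuous phi Hphi) as Hc.
  pose proof Hinv as (_ & _ & Heven & _).
  pose proof (RInt_half_period_ge beta phi Hsys Hb Hinv) as Hmass.
  assert (Hgd : forall y, 0 <= y -> RInt phi0 0 y <= RInt phi 0 y).
  { intros y Hy. rewrite RInt_phi0.
    exact (RInt_ge_atan_sinh phi Hphi Heven (great_circle_long beta phi Hsys) y Hy). }
  pose proof PI_RGT_0. unfold phi_beta.
  destruct (Rle_dec beta (PI / 4)).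
  { apply RInt_const_profile_le; auto.
    - left. apply Rdiv_lt_0_compat; lra.
    - replace (beta * (PI / (4 * beta))) with (PI / 4) by (field; lra). exact Hmass. }
  destruct (Rlt_dec beta beta0).
  { destruct (s_beta_spec beta ltac:(lra)) as [Hs Hsm].
    apply RInt_truncated_profile_le; auto; lra. }
  destruct (Rle_dec beta beta1).
  { apply RInt_phi0_profile_le; auto. lra. }
  pose proof beta1_pos. rewrite <- phi0_beta1.
  apply RInt_truncated_profile_le, RInt_phi0_beta1_mass_le; auto; try lra.
  apply (phi_ge_half beta phi Hsys).
Qed.
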